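(* Let $(E,\mathcal{E},\mu)$, the exchangeable pair $(X,X')$, $L$ and $\Gamma$ be as in the context, and let $F\in L^4(\mu)$. Then \[\mathbb{E}\bigl[(F(X')-F(X))^4\bigr]=4\Bigl(E_\mu[F^3\,LF]+3E_\mu[F^2\Gamma(F,F)]\Bigr)=4\Bigl(3E_\mu[F^2\Gamma(F,F)]-E_\mu[\Gamma(F^3,F)]\Bigr).\] If moreover $F$ is an eigenfunction of $-L$ with eigenvalue $\lambda>0$ (i.e. $LF=-\lambda F$), then \[\mathbb{E}\bigl[(F(X')-F(X))^4\bigr]=4\lambda\Bigl(3E_\mu\bigl[F^2\lambda^{-1}\Gamma(F,F)\bigr]-E_\mu[F^4]\Bigr).\]
   Context: $(E,\mathcal{E},\mu)$ is a probability space; $(X,X')$ is an exchangeable pair (i.e. $(X,X')\overset{d}{=}(X',X)$) of $E$-valued random variables on $(\Omega,\mathcal{F},\mathbb{P})$ with $\mathbb{P}\circ X^{-1}=\mu$, admitting a regular conditional distribution of $X'$ given $X$. $LF(x):=\mathbb{E}[F(X')-F(X)\mid X=x]$ (defined on $L^1(\mu)$ and $L^2(\mu)$), $\Gamma(F,G):=\frac12(L(FG)-F\,LG-G\,LF)$; $E_\mu$ is expectation under $\mu$. *)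

From mathcomp Require Import all_boot all_order all_algebra.
From mathcomp Require Import all_classical all_reals all_analysis.
Set Implicit Arguments. Unset Strict Implicit. Unset Printing Implicit Defensive.
Import Order.TTheory GRing.Theory Num.Theory.
Local Open Scope classical_set_scope.
Local Open Scope ring_scope.

Section defs.
Context d dE (Omega : measurableType d) (E : measurableType dE) (R : realType).

Definition exchangeable (P : probability Omega R) (X X' : Omega -> E) : Prop :=
  forall A : set (E * E)%type, measurable A ->
    P ((fun w => (X w, X' w)) @^-1` A) = P ((fun w => (X' w, X w)) @^-1` A).

Definition is_rcd (P : probability Omega R) (X : {mfun Omega >-> E})
  (X' : Omega -> E) (K : R.-pker E ~> E) : Prop :=
  forall A B : set E, measurable A -> measurable B ->
    P (X @^-1` A `&` X' @^-1` B) = (\int[distribution P X]_(x in A) K x B)%E.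

(* L F (x) = E[F(X') - F(X) | X = x], computed with the regular
   conditional distribution K. *)
Definition Lgen (K : R.-pker E ~> E) (F : E -> R) (x : E) : R :=
  Rintegral (K x) setT (fun y => F y - F x).

Definition Gam (K : R.-pker E ~> E) (F G : E -> R) (x : E) : R :=
  2^-1 * (Lgen K (F \* G) x - F x * Lgen K G x - G x * Lgen K F x).

Definition inLp (mu : {measure set E -> \bar R}) (p : nat) (F : E -> R) : Prop :=
  measurable_fun setT F /\ (\int[mu]_x (`|F x| ^+ p)%:E < +oo)%E.

End defs.

From HB Require Import structures.
From mathcomp Require Import all_boot all_order all_algebra.
From mathcomp Require Import all_classical all_reals all_analysis.
From mathcomp Require Import measurable_realfun ring.
Import Order.TTheory GRing.Theory Num.Theory.

(* Write s = F(X), t = F(X') and M_b(x) = \int F^b dK(x).  Since K disintegrates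
   the law of (X, X') over mu, E_mu[F^a M_b] = E[s^a t^b], while
   L(F^b) = M_b - F^b mu-almost everywhere.  Hence E[(t - s)^4] and every
   integral in the statement is a linear combination of the five mixed moments
   E[s^(4-i) t^i]; exchangeability makes them symmetric under i <-> 4 - i, and
   both identities become linear identities between E[s^4], E[s^3 t] and
   E[s^2 t^2].  For an eigenfunction, E_mu[F^3 LF] = -lambda E_mu[F^4] turns the
   first identity into the last one. *)

Set Implicit Arguments. Unset Strict Implicit. Unset Printing Implicit Defensive.
Local Open Scope classical_set_scope.
Local Open Scope ring_scope.

Lemma normr_monomial_le (R : realDomainType) (u v : R) (a b : nat) :
  `|u ^+ a * v ^+ b| <= `|u| ^+ (a + b) + `|v| ^+ (a + b).
Proof.
wlog uv : u v a b / `|u| <= `|v|.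
  move=> wlog_uv; have [|/ltW vu] := lerP `|u| `|v|; first exact: wlog_uv.
  by rewrite mulrC addnC addrC; exact: wlog_uv.
rewrite normrM !normrX; apply: ler_wpDl; first by rewrite exprn_ge0.
by rewrite exprD ler_wpM2r ?exprn_ge0 // lerXn2r ?nnegrE.
Qed.

Lemma exprn_le_add1 (R : realDomainType) (t : R) (k n : nat) : 0 <= t -> (k <= n)%N ->
  t ^+ k <= 1 + t ^+ n.
Proof.
move=> t0 kn; have [t1|t1] := lerP t 1.
  by apply: le_trans (exprn_ile1 _ t0 t1) _; rewrite lerDl exprn_ge0.
by apply: le_trans (ler_weXn2l (ltW t1) kn) _; rewrite lerDr.
Qed.

Section integrable_lemmas.
Local Open Scope ereal_scope.
Context d (T : measurableType d) (R : realType) (m : {measure set T -> \bar R}).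

Lemma integrable_cst_lty (c : R) : m setT < +oo -> m.-integrable setT (fun=> c%:E).
Proof.
move=> mT; apply/integrableP; split => //.
by rewrite integral_cst // lte_mul_pinfty.
Qed.

Lemma integrable_exprn_le (f : T -> R) (k n : nat) :
  m setT < +oo -> measurable_fun setT f -> (k <= n)%N ->
  m.-integrable setT (fun x => (`|f x| ^+ n)%:E) ->
  m.-integrable setT (fun x => (f x ^+ k)%:E).
Proof.
move=> mT mf kn ifn.
apply: le_integrable (integrableD _ (integrable_cst_lty 1 mT) ifn) => //.
- exact/measurable_EFinP/measurable_funX.
- move=> x _ /=; rewrite lee_fin normrX [leRHS]ger0_norm ?addr_ge0 ?exprn_ge0 //.
  exact: exprn_le_add1.
Qed.

Lemma integrable_ae_eq (f g : T -> \bar R) : measurable_fun setT f ->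
  ae_eq m setT f g -> m.-integrable setT g -> m.-integrable setT f.
Proof.
move=> mf fg /[dup] ig /integrableP[mg ig_fin]; apply/integrableP; split => //.
rewrite (ae_eq_integral (abse \o g)) //; [exact: measurableT_comp..|].
exact: ae_eq_abse.
Qed.

End integrable_lemmas.

Section is_integral.
Local Open Scope ereal_scope.
Context d (T : measurableType d) (R : realType) (m : {measure set T -> \bar R}).

Definition is_integral (f : T -> R) (v : R) :=
  m.-integrable setT (EFin \o f) /\ \int[m]_x (f x)%:E = v%:E.

Lemma is_integral_Rintegral (f : T -> R) :
  m.-integrable setT (EFin \o f) -> is_integral f (Rintegral m setT f).
Proof. by move=> fi; split => //; rewrite fineK //; exact: integrable_fin_num. Qed.

Lemma is_integral_ae_eq (f g : T -> R) (v : R) : measurable_fun setT f ->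
  {ae m, forall x, f x = g x} -> is_integral g v -> is_integral f v.
Proof.
move=> /measurable_EFinP mf fg [ig igE].
have fgE : ae_eq m setT (EFin \o f) (EFin \o g) by apply: filterS fg => x /= -> _.
split; first exact: integrable_ae_eq fgE ig.
by rewrite -igE; exact: ae_eq_integral (measurable_int m ig) fgE.
Qed.

Lemma is_integral_sum (I : Type) (s : seq I) (k : I -> R) (f : I -> T -> R)
    (v : I -> R) : (forall i, is_integral (f i) (v i)) ->
  is_integral (fun x => \sum_(i <- s) k i * f i x)%R (\sum_(i <- s) k i * v i)%R.
Proof.
move=> fv; elim: s => [|i s [IHi IHe]].
  under eq_fun do rewrite big_nil.
  by rewrite big_nil; split; [exact: integrable0 | exact: integral0].
have [fi fiE] := fv i; have kfi := integrableZl measurableT (k i) fi.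
rewrite /is_integral; have -> : EFin \o (fun x => \sum_(j <- i :: s) k j * f j x)%R =
    (fun x => (k i)%:E * (f i x)%:E) \+ (EFin \o fun x => \sum_(j <- s) k j * f j x)%R.
  by apply/funext => x; rewrite /= big_cons EFinD EFinM.
split; first exact: integrableD.
under eq_integral do rewrite big_cons EFinD EFinM.
by rewrite integralD //= integralZl // fiE IHe big_cons EFinD EFinM.
Qed.

Lemma is_integralZ (k : R) (f : T -> R) (v : R) :
  is_integral f v -> is_integral (fun x => k * f x)%R (k * v)%R.
Proof.
move=> [fi fiE]; have kfi := integrableZl measurableT k fi.
rewrite /is_integral (_ : EFin \o _ = fun x => k%:E * (f x)%:E); last first.
  by apply/funext => x; rewrite /= EFinM.
split => //.
by under eq_integral do rewrite EFinM; rewrite integralZl // fiE EFinM.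
Qed.

End is_integral.

Section joint_measure.
Local Open Scope ereal_scope.
Context d1 d2 (T1 : measurableType d1) (T2 : measurableType d2) (R : realType).
Variables (mu : probability T1 R) (K : R.-pker T1 ~> T2).

(* [mu] and the graph of [K] are seen as kernels from [unit], so that [kjoint]
   is a kernel composition, for which [integral_kcomp] provides Tonelli. *)
Let kmu := kprobability (@measurable_cst _ _ unit (pprobability T1 R) setT mu).

Definition kernel_graph (p : unit * T1) (A : set (T1 * T2)) : \bar R :=
  K p.2 (xsection A p.2).

Let kernel_graph_0 p : kernel_graph p set0 = 0.
Proof. by rewrite /kernel_graph xsection0 measure0. Qed.

Let kernel_graph_ge0 p A : 0 <= kernel_graph p A.
Proof. exact: measure_ge0. Qed.

Let kernel_graph_sigma_additive p : semi_sigma_additive (kernel_graph p).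
Proof.
move=> F mF tF mUF; rewrite /kernel_graph xsection_bigcup.
apply: measure_semi_sigma_additive.
- by move=> n; exact: measurable_xsection.
- exact: trivIset_xsection.
- by rewrite -xsection_bigcup; exact: measurable_xsection.
Qed.

HB.instance Definition _ p := isMeasure.Build _ _ R (kernel_graph p)
  (kernel_graph_0 p) (kernel_graph_ge0 p) (@kernel_graph_sigma_additive p).

Let mkernel_graph : unit * T1 -> {measure set (T1 * T2) -> \bar R} :=
  kernel_graph.

Let measurable_mkernel_graph U : measurable U ->
  measurable_fun setT (mkernel_graph ^~ U).
Proof.
move=> mU; apply: (measurableT_comp (f := fun x => K x (xsection U x))) => //.
by apply: measurable_fun_xsection_finite_kernel; rewrite inE.
Qed.

HB.instance Definition _ :=
  isKernel.Build _ _ _ _ R mkernel_graph measurable_mkernel_graph.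

Let mkernel_graph_setT p : mkernel_graph p setT = 1.
Proof.
rewrite /mkernel_graph /= /kernel_graph (_ : xsection _ _ = setT) ?prob_kernel //.
by apply/seteqP; split=> y //= _; rewrite /xsection /= in_setT.
Qed.

HB.instance Definition _ :=
  Kernel_isProbability.Build _ _ _ _ R mkernel_graph mkernel_graph_setT.

Definition kjoint : {measure set (T1 * T2) -> \bar R} := mkcomp kmu mkernel_graph tt.

Lemma kjointE A : kjoint A = \int[mu]_x K x (xsection A x).
Proof. by []. Qed.

Lemma ge0_integral_kjoint (g : T1 * T2 -> \bar R) :
  measurable_fun setT g -> (forall z, 0 <= g z) ->
  \int[kjoint]_z g z = \int[mu]_x \int[K x]_y g (x, y).
Proof.
move=> mg g0; rewrite /kjoint /= integral_kcomp //; apply: eq_integral => x _ /=.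
have -> : mkernel_graph (tt, x) = pushforward (K x) (pair x) :> (set _ -> \bar R).
  by apply/funext => A; rewrite /mkernel_graph /= /kernel_graph /= xsectionE.
by rewrite ge0_integral_pushforward //; exact: measurable_fun_pair.
Qed.

Lemma integrable_kjoint_section (g : T1 * T2 -> \bar R) :
  measurable_fun setT g -> (forall z, 0 <= g z) -> kjoint.-integrable setT g ->
  mu.-integrable setT (fun x => \int[K x]_y g (x, y)).
Proof.
move=> mg g0 /integrableP[_]; under eq_integral do rewrite gee0_abs //.
rewrite ge0_integral_kjoint // => gfin; apply/integrableP; split.
  exact: (measurable_fun_integral_finite_kernel _ K).
by under eq_integral do rewrite gee0_abs ?integral_ge0 //.
Qed.

Lemma Rintegral_kernelE (psi : T1 * T2 -> R) x :
  Rintegral (K x) setT (fun y => psi (x, y)) =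
  fine (\int[K x]_y (EFin \o psi)^\+ (x, y) - \int[K x]_y (EFin \o psi)^\- (x, y)).
Proof.
rewrite /Rintegral integralE; congr (fine (_ - _)).
- by apply: eq_integral => y _; rewrite !funeposE.
- by apply: eq_integral => y _; rewrite !funenegE.
Qed.

Lemma measurable_Rintegral_kernel (psi : T1 * T2 -> R) : measurable_fun setT psi ->
  measurable_fun setT (fun x => Rintegral (K x) setT (fun y => psi (x, y))).
Proof.
move=> /measurable_EFinP mpsi; under eq_fun do rewrite Rintegral_kernelE.
apply: measurableT_comp; first exact: fine_measurable.
apply: emeasurable_funB; apply: (measurable_fun_integral_finite_kernel _ K) => //.
- exact: measurable_funepos.
- exact: measurable_funeneg.
Qed.

Lemma is_integral_kjoint (psi : T1 * T2 -> R) : kjoint.-integrable setT (EFin \o psi) ->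
  is_integral mu (fun x => Rintegral (K x) setT (fun y => psi (x, y)))
    (Rintegral kjoint setT psi).
Proof.
move=> ipsi; have mpsi := measurable_int _ ipsi.
pose phi_pos x := \int[K x]_y (EFin \o psi)^\+ (x, y).
pose phi_neg x := \int[K x]_y (EFin \o psi)^\- (x, y).
have iphi_pos : mu.-integrable setT phi_pos.
  apply: integrable_kjoint_section; [exact: measurable_funepos | by [] |].
  exact: integrable_funepos.
have iphi_neg : mu.-integrable setT phi_neg.
  apply: integrable_kjoint_section; [exact: measurable_funeneg | by [] |].
  exact: integrable_funeneg.
have Rint_ae : ae_eq mu setT
    (EFin \o fun x => Rintegral (K x) setT (fun y => psi (x, y))) (phi_pos \- phi_neg).
  apply: filterS2 (integrable_ae measurableT iphi_pos) (integrable_ae measurableT iphi_neg).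
  move=> x /(_ I) pfin /(_ I) nfin _.
  by rewrite /= Rintegral_kernelE fineK // fin_numB pfin.
have mRint := (measurable_EFinP _ _).2
  (measurable_Rintegral_kernel ((measurable_EFinP _ _).1 mpsi)).
split; first exact: integrable_ae_eq mRint Rint_ae (integrableB _ _ _).
rewrite (ae_eq_integral _ _ measurableT mRint _ Rint_ae); last first.
  exact: emeasurable_funB (measurable_int _ iphi_pos) (measurable_int _ iphi_neg).
rewrite integralB // -!ge0_integral_kjoint //;
  [|exact: measurable_funeneg|exact: measurable_funepos].
by rewrite -integralE fineK //; exact: integrable_fin_num.
Qed.

End joint_measure.

Section mfun_pair.
Context d d1 d2 (T : measurableType d) (T1 : measurableType d1)
  (T2 : measurableType d2) (f : {mfun T >-> T1}) (g : {mfun T >-> T2}).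

Definition mfun_pair (w : T) : T1 * T2 := (f w, g w).

HB.instance Definition _ := isMeasurableFun.Build _ _ _ _ mfun_pair
  (measurable_fun_pair (@measurable_funPT _ _ _ _ f) (@measurable_funPT _ _ _ _ g)).

End mfun_pair.

Section exchangeable_pair.
Local Open Scope ereal_scope.
Context d dE (Omega : measurableType d) (E : measurableType dE) (R : realType).
Variables (P : probability Omega R) (X X' : {mfun Omega >-> E}).

Lemma integral_comp_distribution d' (T : measurableType d')
    (Y : {mfun Omega >-> T}) (g : T -> \bar R) : measurable_fun setT g ->
  \int[P]_w g (Y w) = \int[distribution P Y]_y g y.
Proof.
move=> mg; rewrite integralE [RHS]integralE; congr (_ - _).
- rewrite ge0_integral_distribution //; last exact: measurable_funepos.
  by apply: eq_integral => w _; rewrite /= !funeposE.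
- rewrite ge0_integral_distribution //; last exact: measurable_funeneg.
  by apply: eq_integral => w _; rewrite /= !funenegE.
Qed.

Lemma exchangeable_integral (g : E * E -> \bar R) : exchangeable P X X' ->
  measurable_fun setT g -> \int[P]_w g (X w, X' w) = \int[P]_w g (X' w, X w).
Proof.
move=> exch mg; rewrite !(integral_comp_distribution (mfun_pair _ _)) //.
by apply: eq_measure_integral => A mA _; exact: exch.
Qed.

Variable K : R.-pker E ~> E.
Hypothesis rcd : is_rcd P X X' K.

Lemma distribution_rcd A : measurable A ->
  distribution P (mfun_pair X X') A = kjoint (distribution P X) K A.
Proof.
move=> mA.
apply: (measure_unique [set A `*` B | A in measurable & B in measurable]
  (fun=> setT)) => //.
- exact: measurable_prod_measurableType.
- move=> _ _ [A1 mA1 [B1 mB1 <-]] [A2 mA2 [B2 mB2 <-]].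
  exists (A1 `&` A2); first exact: measurableI.
  by exists (B1 `&` B2); [exact: measurableI | rewrite setXI].
- by move=> _; exists setT => //; exists setT => //; rewrite setXTT.
- by rewrite bigcup_const.
- move=> _ [A1 mA1 [B1 mB1 <-]].
  rewrite kjointE; transitivity (P (X @^-1` A1 `&` X' @^-1` B1)); first by [].
  rewrite rcd // integral_mkcond /=; apply: eq_integral => x _; rewrite patchE.
  case: ifPn => xA; first by rewrite in_xsectionX.
  by rewrite notin_xsectionX // measure0.
- move=> _; change (P (mfun_pair X X' @^-1` setT) < +oo).
  by rewrite probability_setT ltry.
Qed.

Lemma integral_rcd (g : E * E -> \bar R) : measurable_fun setT g ->
  \int[P]_w g (X w, X' w) = \int[kjoint (distribution P X) K]_z g z.
Proof.
move=> mg; rewrite (integral_comp_distribution (mfun_pair X X')) //.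
by apply: eq_measure_integral => A mA _; exact: distribution_rcd.
Qed.

Lemma is_integral_rcd (psi : E * E -> R) : measurable_fun setT psi ->
  P.-integrable setT (fun w => (psi (X w, X' w))%:E) ->
  is_integral (distribution P X)
    (fun x => Rintegral (K x) setT (fun y => psi (x, y)))
    (Rintegral P setT (fun w => psi (X w, X' w))).
Proof.
move=> /measurable_EFinP mpsi /integrableP[_ ipsi].
have -> : Rintegral P setT (fun w => psi (X w, X' w)) =
    Rintegral (kjoint (distribution P X) K) setT psi.
  by rewrite /Rintegral (integral_rcd mpsi).
apply: is_integral_kjoint; apply/integrableP; split => //.
rewrite -(integral_rcd (g := abse \o (EFin \o psi))) //.
exact: measurableT_comp mpsi.
Qed.

End exchangeable_pair.

Section generator.
Context dE (E : measurableType dE) (R : realType) (K : R.-pker E ~> E).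

Lemma measurable_Lgen (h : E -> R) : measurable_fun setT h ->
  measurable_fun setT (Lgen K h).
Proof.
move=> mh; apply: (measurable_Rintegral_kernel K (psi := fun z => h z.2 - h z.1)).
by apply: measurable_funB; exact: measurableT_comp.
Qed.

Lemma measurable_Gam (h1 h2 : E -> R) : measurable_fun setT h1 ->
  measurable_fun setT h2 -> measurable_fun setT (Gam K h1 h2).
Proof.
move=> m1 m2; apply: measurable_funM => //.
apply: measurable_funB; first apply: measurable_funB.
- by apply: measurable_Lgen; exact: measurable_funM.
- by apply: measurable_funM => //; exact: measurable_Lgen.
- by apply: measurable_funM => //; exact: measurable_Lgen.
Qed.

End generator.

(* [k] lists the coefficients of the monomials s^4, s^3 t, ..., t^4, with
   [g a b] standing for s^a t^b; omitted trailing coefficients are 0. *)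
Definition quartic (R : pzRingType) (k : seq R) (g : nat -> nat -> R) : R :=
  \sum_(i < 5) k`_i * g (4 - i)%N i.

Lemma quarticE (R : pzRingType) (k : seq R) (g : nat -> nat -> R) :
  quartic k g = k`_0 * g 4%N 0%N + k`_1 * g 3%N 1%N + k`_2 * g 2%N 2%N
    + k`_3 * g 1%N 3%N + k`_4 * g 0%N 4%N.
Proof. by rewrite /quartic !big_ord_recr big_ord0 /= add0r. Qed.

Section fourth_moment.
Context d dE (Omega : measurableType d) (E : measurableType dE) (R : realType).
Variables (P : probability Omega R) (X X' : {mfun Omega >-> E}).
Variables (K : R.-pker E ~> E) (F : E -> R).
Hypotheses (exch : exchangeable P X X') (rcd : is_rcd P X X' K).
Hypotheses (mF : measurable_fun setT F)
  (F4 : (\int[distribution P X]_x (`|F x| ^+ 4)%:E < +oo)%E).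
Local Notation mu := (distribution P X).

Let mF4 : measurable_fun setT (fun x => (`|F x| ^+ 4)%:E).
Proof. exact/measurable_EFinP/measurable_funX/measurableT_comp. Qed.

Let integrable_F4_comp (Y : {mfun Omega >-> E}) :
  (\int[P]_w (`|F (Y w)| ^+ 4)%:E < +oo)%E ->
  P.-integrable setT (fun w => (`|F (Y w)| ^+ 4)%:E).
Proof.
move=> FY; apply/integrableP; split; first exact: measurableT_comp mF4 _.
by under eq_integral do rewrite gee0_abs ?lee_fin ?exprn_ge0 //.
Qed.

Let F4_X : (\int[P]_w (`|F (X w)| ^+ 4)%:E < +oo)%E.
Proof. by rewrite (integral_comp_distribution P X (g := fun x => (`|F x| ^+ 4)%:E)). Qed.

Let F4_X' : (\int[P]_w (`|F (X' w)| ^+ 4)%:E < +oo)%E.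
Proof.
rewrite (exchangeable_integral (g := fun z => (`|F z.2| ^+ 4)%:E) exch) //.
exact: measurableT_comp mF4 _.
Qed.

Lemma integrable_pair_monomial (a b : nat) : (a + b = 4)%N ->
  P.-integrable setT (fun w => (F (X w) ^+ a * F (X' w) ^+ b)%:E).
Proof.
move=> ab; have iF4 := integrableD measurableT
  (integrable_F4_comp F4_X) (integrable_F4_comp F4_X').
apply: le_integrable iF4 => //.
- apply/measurable_EFinP; apply: measurable_funM; apply: measurable_funX;
    exact: measurableT_comp.
- move=> w _ /=; rewrite lee_fin [leRHS]ger0_norm ?addr_ge0 ?exprn_ge0 // -ab.
  exact: normr_monomial_le.
Qed.

Lemma ae_integrable_kernel_F4 :
  {ae mu, forall x, (K x).-integrable setT (fun y => (`|F y| ^+ 4)%:E)}.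
Proof.
have mg : measurable_fun setT (fun z : E * E => (`|F z.2| ^+ 4)%:E).
  exact: measurableT_comp mF4 _.
have g0 (z : E * E) : (0 <= (`|F z.2| ^+ 4)%:E)%E by rewrite lee_fin exprn_ge0.
have : mu.-integrable setT (fun x => \int[K x]_y (`|F (x, y).2| ^+ 4)%:E)%E.
  apply: (integrable_kjoint_section mg g0).
  apply/integrableP; split; first exact: mg.
  under eq_integral do rewrite gee0_abs //.
  by rewrite -(integral_rcd rcd mg).
move=> /(integrable_ae measurableT); apply: filterS => x /(_ I) Kfin.
apply/integrableP; split => //.
by under eq_integral do rewrite gee0_abs ?lee_fin ?exprn_ge0 //; rewrite ltey_eq Kfin.
Qed.

Definition cmoment (b : nat) (x : E) : R :=
  Rintegral (K x) setT (fun y => F y ^+ b).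

Lemma cmoment0 x : cmoment 0 x = 1.
Proof. by rewrite /cmoment Rintegral_cst // prob_kernel mul1r. Qed.

Lemma Lgen_exprn (h : E -> R) (b : nat) x : (b <= 4)%N ->
  (K x).-integrable setT (fun y => (`|F y| ^+ 4)%:E) ->
  (forall y, h y = F y ^+ b) -> Lgen K h x = cmoment b x - F x ^+ b.
Proof.
move=> b4 iF4 hE.
have -> : Lgen K h x = Rintegral (K x) setT (fun y => F y ^+ b - F x ^+ b).
  by rewrite /Lgen; congr Rintegral; apply/funext => y; rewrite !hE.
rewrite RintegralB //.
- by rewrite Rintegral_cst // prob_kernel mulr1.
- by apply: (integrable_exprn_le _ mF b4 iF4); rewrite prob_kernel ltry.
- by apply: integrable_cst_lty; rewrite prob_kernel ltry.
Qed.

Definition pair_moment (i : nat) : R :=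
  Rintegral P setT (fun w => F (X w) ^+ (4 - i) * F (X' w) ^+ i).

Lemma pair_moment_sym i : (i <= 4)%N -> pair_moment (4 - i) = pair_moment i.
Proof.
move=> i4; rewrite /pair_moment subKn //; congr fine.
rewrite (exchangeable_integral
  (g := fun z => (F z.1 ^+ i * F z.2 ^+ (4 - i))%:E) exch) //.
  by apply: eq_integral => w _; rewrite mulrC.
apply/measurable_EFinP; apply: measurable_funM; apply: measurable_funX;
  exact: measurableT_comp.
Qed.

Lemma is_integral_cmoment i : (i <= 4)%N ->
  is_integral mu (fun x => F x ^+ (4 - i) * cmoment i x) (pair_moment i).
Proof.
move=> i4.
have mpsi : measurable_fun setT (fun z : E * E => F z.1 ^+ (4 - i) * F z.2 ^+ i).
  by apply: measurable_funM; apply: measurable_funX; exact: measurableT_comp.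
have ipsi : P.-integrable setT (fun w => (F (X w) ^+ (4 - i) * F (X' w) ^+ i)%:E).
  by apply: integrable_pair_monomial; rewrite subnK.
apply: is_integral_ae_eq (is_integral_rcd rcd mpsi ipsi).
- apply: measurable_funM; first exact: measurable_funX.
  apply: (measurable_Rintegral_kernel K (psi := fun z => F z.2 ^+ i)).
  by apply: measurable_funX; exact: measurableT_comp.
- apply: filterS ae_integrable_kernel_F4 => x iF4 /=.
  rewrite RintegralZl //; apply: (integrable_exprn_le _ mF i4 iF4).
  by rewrite prob_kernel ltry.
Qed.

Lemma is_integral_quartic_cmoment (k : seq R) :
  is_integral mu (fun x => quartic k (fun a b => F x ^+ a * cmoment b x))
    (quartic k (fun _ b => pair_moment b)).
Proof.
apply: (is_integral_sum (index_enum 'I_5) (fun i => k`_i)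
  (f := fun (i : 'I_5) x => F x ^+ (4 - i) * cmoment i x)) => i.
exact: is_integral_cmoment (ltn_ord i).
Qed.

Lemma is_integral_quartic_pair (k : seq R) :
  is_integral P (fun w => quartic k (fun a b => F (X w) ^+ a * F (X' w) ^+ b))
    (quartic k (fun _ b => pair_moment b)).
Proof.
apply: (is_integral_sum (index_enum 'I_5) (fun i => k`_i)
  (f := fun (i : 'I_5) w => F (X w) ^+ (4 - i) * F (X' w) ^+ i)) => i.
apply: is_integral_Rintegral; apply: integrable_pair_monomial.
by rewrite subnK // -ltnS ltn_ord.
Qed.

Lemma is_integral_fourth_increment :
  is_integral P (fun w => (F (X' w) - F (X w)) ^+ 4)
    (quartic [:: 1; -4; 6; -4; 1] (fun _ b => pair_moment b)).
Proof.
apply: is_integral_ae_eq (is_integral_quartic_pair _).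
  by apply: measurable_funX; apply: measurable_funB; exact: measurableT_comp.
by apply: aeW => w; rewrite quarticE /=; ring.
Qed.

Lemma is_integral_F3_Lgen :
  is_integral mu (fun x => F x ^+ 3 * Lgen K F x)
    (quartic [:: -1; 1] (fun _ b => pair_moment b)).
Proof.
apply: is_integral_ae_eq (is_integral_quartic_cmoment _).
  by apply: measurable_funM; [exact: measurable_funX | exact: measurable_Lgen].
apply: filterS ae_integrable_kernel_F4 => x iF4.
rewrite quarticE /= (Lgen_exprn (h := F) (b := 1)) ?expr1 // cmoment0; ring.
Qed.

Lemma is_integral_F2_Gam :
  is_integral mu (fun x => F x ^+ 2 * Gam K F F x)
    (quartic [:: 2^-1; -1; 2^-1] (fun _ b => pair_moment b)).
Proof.
apply: is_integral_ae_eq (is_integral_quartic_cmoment _).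
  by apply: measurable_funM; [exact: measurable_funX | exact: measurable_Gam].
apply: filterS ae_integrable_kernel_F4 => x iF4.
rewrite quarticE /= /Gam (Lgen_exprn (h := F) (b := 1)) ?expr1 //.
by rewrite (Lgen_exprn (h := F \* F) (b := 2)) ?expr2 // cmoment0; field.
Qed.

Lemma is_integral_Gam_F3 :
  is_integral mu (Gam K (F ^+ 3) F)
    (quartic [:: 2^-1; -2^-1; 0; -2^-1; 2^-1] (fun _ b => pair_moment b)).
Proof.
have F3E y : (F ^+ 3) y = F y ^+ 3 by rewrite exprfctE.
have F4E y : (F ^+ 3 \* F) y = F y ^+ 4 by rewrite /= F3E -exprSr.
apply: is_integral_ae_eq (is_integral_quartic_cmoment _).
  by apply: measurable_Gam => //; rewrite (funext F3E); exact: measurable_funX.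
apply: filterS ae_integrable_kernel_F4 => x iF4.
rewrite quarticE /= /Gam (Lgen_exprn (h := F) (b := 1)) ?expr1 //.
rewrite (Lgen_exprn (b := 3) isT iF4 F3E) (Lgen_exprn (b := 4) isT iF4 F4E).
by rewrite F3E cmoment0; field.
Qed.

Lemma is_integral_F4 : is_integral mu (fun x => F x ^+ 4) (pair_moment 0).
Proof.
apply: is_integral_ae_eq (is_integral_cmoment (i := 0) isT).
  exact: measurable_funX.
by apply: aeW => x; rewrite cmoment0 mulr1.
Qed.

Lemma is_integral_F3_Lgen_eigen (lambda : R) :
  {ae mu, forall x, Lgen K F x = - (lambda * F x)} ->
  is_integral mu (fun x => F x ^+ 3 * Lgen K F x) (- lambda * pair_moment 0).
Proof.
move=> eigen; apply: is_integral_ae_eq (is_integralZ _ is_integral_F4).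
  by apply: measurable_funM; [exact: measurable_funX | exact: measurable_Lgen].
by apply: filterS eigen => x ->; ring.
Qed.

End fourth_moment.

Theorem lemma2p6 (d dE : measure_display) (Omega : measurableType d)
  (E : measurableType dE) (R : realType) (P : probability Omega R)
  (X X' : {mfun Omega >-> E}) (K : R.-pker E ~> E) (F : E -> R) :
  exchangeable P X X' ->
  is_rcd P X X' K ->
  inLp (distribution P X) 4 F ->
  let L := Lgen K in
  let G := Gam K in
  ('E_P[fun w => ((F (X' w) - F (X w)) ^+ 4)%R]
     = 4%:E * (\int[distribution P X]_x (F x ^+ 3 * L F x)%:E
               + 3%:E * \int[distribution P X]_x (F x ^+ 2 * G F F x)%:E)
   /\ 'E_P[fun w => ((F (X' w) - F (X w)) ^+ 4)%R]
     = 4%:E * (3%:E * \int[distribution P X]_x (F x ^+ 2 * G F F x)%:E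
               - \int[distribution P X]_x (G (F ^+ 3) F x)%:E))%E
  /\ (forall lambda : R, 0 < lambda ->
        {ae distribution P X, forall x, L F x = - (lambda * F x)} ->
        ('E_P[fun w => ((F (X' w) - F (X w)) ^+ 4)%R]
          = (4 * lambda)%:E
             * (3%:E * \int[distribution P X]_x (F x ^+ 2 * (lambda^-1 * G F F x))%:E
                - \int[distribution P X]_x (F x ^+ 4)%:E))%E).
Proof.
move=> exch rcd [mF F4] L G; rewrite {}/L {}/G.
have [_ E4] := is_integral_fourth_increment exch mF F4.
have [_ I1] := is_integral_F3_Lgen exch rcd mF F4.
have F2Gam := is_integral_F2_Gam exch rcd mF F4.
have [_ I3] := is_integral_Gam_F3 exch rcd mF F4.
have m31 := pair_moment_sym exch mF (i := 1) isT.
have m40 := pair_moment_sym exch mF (i := 0) isT.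
have Ea : ('E_P[fun w => ((F (X' w) - F (X w)) ^+ 4)%R] = 4%:E * (
    \int[distribution P X]_x (F x ^+ 3 * Lgen K F x)%:E
    + 3%:E * \int[distribution P X]_x (F x ^+ 2 * Gam K F F x)%:E))%E.
  rewrite unlock E4 I1 F2Gam.2 -!EFinM !quarticE /=; congr EFin.
  by rewrite m31 m40; field.
split; [split => //| move=> lambda lambda_gt0 eigen].
  rewrite unlock E4 F2Gam.2 I3 -!EFinM !quarticE /=; congr EFin.
  by rewrite m31 m40; field.
have [_ I4] := is_integral_F4 exch rcd mF F4.
have [_ I1'] := is_integral_F3_Lgen_eigen exch rcd mF F4 eigen.
have [_ I2'] := is_integralZ lambda^-1 F2Gam.
under eq_integral do rewrite mulrCA.
rewrite Ea I1' F2Gam.2 I2' I4 -!EFinM; congr EFin.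
by field; rewrite gt_eqF.
Qed.
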